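(* Let $\alpha,\alpha'\in(0,1)$ with $\alpha>\alpha'$, and let $\mathcal M_\alpha$ and $\mathcal M_{\alpha'}$ denote the sets of mechanisms that are undominated with respect to $\mathrm{RS}_\alpha$ and $\mathrm{RS}_{\alpha'}$ respectively. Then $\mathcal M_{\alpha'}\subseteq\mathcal M_\alpha$.
   Context: Setting. Let $\Theta=[\underline\theta,\overline\theta]$ with $0<\underline\theta<\overline\theta$. Let $c>0$ and let $P:\mathbb R_+\to\mathbb R_+$ be continuous and strictly decreasing with $P(\overline q)=0$ for some $\overline q>0$. Put $V(q)=\int_0^q P(z)\,dz$ and $\mathrm{TS}(\theta,q)=V(q)-c-\theta q$ for $q>0$, $\mathrm{TS}(\theta,0)=0$. Assume (A2): $\mathrm{TS}(\overline\theta,P^{-1}(\overline\theta))>0$. A mechanism is a triple $M=(r,q,u)$ of functions $r:\Theta\to[0,1]$, $q:\Theta\to[0,\overline q]$, $u:\Theta\to\mathbb R$ with $q(\theta)=0$ if and only if $r(\theta)=0$. It is IC if $u(\theta)\ge u(\theta')+(\theta'-\theta)q(\theta')r(\theta')$ for all $\theta,\theta'\in\Theta$, and IR if $u(\theta)\ge 0$ for all $\theta$. (Known fact: $M$ is IC iff $\theta\mapsto q(\theta)r(\theta)$ is nonincreasing and $u(\theta)=u(\overline\theta)+\int_\theta^{\overline\theta}q(z)r(z)\,dz$ for all $\theta$; an IC mechanism is IR iff $u(\overline\theta)\ge0$.) For a weight $\beta\in[0,1)$, the regulator's surplus at $\theta$ is $\mathrm{RS}_\beta(\theta,M)=r(\theta)\,\mathrm{TS}(\theta,q(\theta))-(1-\beta)u(\theta)$.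 An IC and IR mechanism $\tilde M$ dominates an IC and IR mechanism $M$ with respect to $\mathrm{RS}_\beta$ if $\mathrm{RS}_\beta(\theta,\tilde M)\ge \mathrm{RS}_\beta(\theta,M)$ for all $\theta\in\Theta$ with strict inequality for some $\theta$; $M$ is undominated (w.r.t. $\mathrm{RS}_\beta$) if it is IC, IR and not dominated in this sense by any IC and IR mechanism. *)

From Stdlib Require Import Reals.
From Coquelicot Require Import Coquelicot.
Open Scope R_scope.

Definition inTheta (thl thh th : R) : Prop := thl <= th <= thh.

Definition Vf (P : R -> R) (q : R) : R := RInt P 0 q.

Definition TS (P : R -> R) (c th q : R) : R :=
  if Rlt_dec 0 q then Vf P q - c - th * q else 0.

(* A mechanism is a triple (r, q, u) of functions on Theta
   (represented as functions R -> R; only values on Theta matter). *)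
Record mechanism := Mech { mr : R -> R; mq : R -> R; mu : R -> R }.

Definition is_mechanism (thl thh qbar : R) (M : mechanism) : Prop :=
  forall th, inTheta thl thh th ->
    (0 <= mr M th <= 1) /\ (0 <= mq M th <= qbar) /\
    (mq M th = 0 <-> mr M th = 0).

Definition IC (thl thh : R) (M : mechanism) : Prop :=
  forall th th', inTheta thl thh th -> inTheta thl thh th' ->
    mu M th >= mu M th' + (th' - th) * mq M th' * mr M th'.

Definition IR (thl thh : R) (M : mechanism) : Prop :=
  forall th, inTheta thl thh th -> mu M th >= 0.

Definition ICIR (thl thh qbar : R) (M : mechanism) : Prop :=
  is_mechanism thl thh qbar M /\ IC thl thh M /\ IR thl thh M.

Definition RS (P : R -> R) (c beta : R) (th : R) (M : mechanism) : R :=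
  mr M th * TS P c th (mq M th) - (1 - beta) * mu M th.

Definition dominates (thl thh qbar : R) (P : R -> R) (c beta : R)
  (Mt M : mechanism) : Prop :=
  ICIR thl thh qbar Mt /\ ICIR thl thh qbar M /\
  (forall th, inTheta thl thh th -> RS P c beta th Mt >= RS P c beta th M) /\
  (exists th, inTheta thl thh th /\ RS P c beta th Mt > RS P c beta th M).

Definition undominated (thl thh qbar : R) (P : R -> R) (c beta : R)
  (M : mechanism) : Prop :=
  ICIR thl thh qbar M /\
  ~ (exists Mt, dominates thl thh qbar P c beta Mt M).

(* Suppose [Mt] dominates [M] for the weight alpha and let D = u_Mt - u_M.
   Since RS_alpha' = RS_alpha - (alpha - alpha') u, the surplus gain for
   alpha' is the gain for alpha minus (alpha - alpha') D.  If D <= 0 on Theta,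
   [Mt] itself dominates [M] for alpha'.  Otherwise D, which is Lipschitz by
   incentive compatibility, attains a positive maximum m at some type a; the
   mechanism that runs [Mt] with rents lowered by m on types below a and [M]
   above a is still IC and IR, and it dominates [M] for alpha'. *)

From Stdlib Require Import Reals Lra Classical.
From Coquelicot Require Import Coquelicot.
Open Scope R_scope.

Lemma lipschitz_continuity_pt (f : R -> R) (K : R) : 0 <= K ->
  (forall x y, Rabs (f x - f y) <= K * Rabs (x - y)) ->
  forall x, continuity_pt f x.
Proof.
  intros HK Hlip x eps Heps.
  exists (eps / (K + 1)); split; [apply Rdiv_lt_0_compat; lra|].
  intros y [_ Hy]; simpl in *; unfold R_dist in *.
  apply (Rle_lt_trans _ (K * Rabs (y - x))); [apply Hlip|].
  assert (Hy' : Rabs (y - x) * (K + 1) < eps).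
  { apply (Rmult_lt_compat_r (K + 1)) in Hy; [|lra].
    unfold Rdiv in Hy; rewrite Rmult_assoc, Rinv_l in Hy; lra. }
  pose proof (Rabs_pos (y - x)); nra.
Qed.

Definition clamp (l h x : R) : R := Rmax l (Rmin h x).

Lemma clamp_in (l h x : R) : l <= h -> l <= clamp l h x <= h.
Proof. intros; unfold clamp, Rmax, Rmin; repeat destruct Rle_dec; lra. Qed.

Lemma clamp_id (l h x : R) : l <= x <= h -> clamp l h x = x.
Proof. intros; unfold clamp, Rmax, Rmin; repeat destruct Rle_dec; lra. Qed.

Lemma clamp_contract (l h x y : R) : l <= h ->
  Rabs (clamp l h x - clamp l h y) <= Rabs (x - y).
Proof.
  intros; unfold clamp, Rmax, Rmin.
  repeat destruct Rle_dec; unfold Rabs; repeat destruct Rcase_abs; lra.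
Qed.

(* Composing with [clamp] gives a function continuous on all of R, as
   [continuity_ab_maj] requires two-sided continuity at the endpoints. *)
Lemma lipschitz_on_attains_max (f : R -> R) (l h K : R) : l <= h -> 0 <= K ->
  (forall x y, l <= x <= h -> l <= y <= h -> Rabs (f x - f y) <= K * Rabs (x - y)) ->
  exists a, l <= a <= h /\ forall x, l <= x <= h -> f x <= f a.
Proof.
  intros Hlh HK Hlip.
  assert (Hcont : forall x, continuity_pt (fun x => f (clamp l h x)) x).
  { apply (lipschitz_continuity_pt _ K HK); intros x y.
    apply (Rle_trans _ (K * Rabs (clamp l h x - clamp l h y)));
      [apply Hlip; apply clamp_in; exact Hlh|].
    apply Rmult_le_compat_l; [exact HK | apply clamp_contract; exact Hlh]. }
  destruct (continuity_ab_maj _ l h Hlh (fun x _ => Hcont x)) as [a [Hmax Ha]].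
  exists a; split; [exact Ha|]; intros x Hx.
  specialize (Hmax x Hx); rewrite !clamp_id in Hmax; assumption.
Qed.

Lemma RS_weight_shift (P : R -> R) (c beta beta' th : R) (M : mechanism) :
  RS P c beta' th M = RS P c beta th M - (beta - beta') * mu M th.
Proof. unfold RS; ring. Qed.

Section Mechanisms.

Variables thl thh qbar : R.

Lemma IC_utility_lipschitz (M : mechanism) :
  is_mechanism thl thh qbar M -> IC thl thh M ->
  forall x y, inTheta thl thh x -> inTheta thl thh y ->
  Rabs (mu M x - mu M y) <= qbar * Rabs (x - y).
Proof.
  intros Hm Hic x y Hx Hy.
  destruct (Hm x Hx) as [[? ?] [[? ?] _]], (Hm y Hy) as [[? ?] [[? ?] _]].
  pose proof (Hic x y Hx Hy); pose proof (Hic y x Hy Hx).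
  assert (0 <= mq M x * mr M x <= qbar) by (split; nra).
  assert (0 <= mq M y * mr M y <= qbar) by (split; nra).
  unfold Rabs; repeat destruct Rcase_abs; nra.
Qed.

Lemma utility_gap_attains_max (Mt M : mechanism) : thl <= thh ->
  ICIR thl thh qbar Mt -> ICIR thl thh qbar M ->
  exists a, inTheta thl thh a /\ forall th, inTheta thl thh th ->
    mu Mt th - mu M th <= mu Mt a - mu M a.
Proof.
  intros Hlh [HmT [ICT _]] [Hm [ICM _]].
  assert (Hq : 0 <= qbar).
  { destruct (Hm thl ltac:(unfold inTheta; lra)) as [_ [? _]]; lra. }
  apply (lipschitz_on_attains_max _ thl thh (qbar + qbar) Hlh ltac:(lra)).
  intros x y Hx Hy.
  pose proof (IC_utility_lipschitz Mt HmT ICT x y Hx Hy).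
  pose proof (IC_utility_lipschitz M Hm ICM x y Hx Hy).
  pose proof (Rabs_triang (mu Mt x - mu Mt y) (- (mu M x - mu M y))) as Htri.
  rewrite Rabs_Ropp in Htri.
  replace (mu Mt x - mu M x - (mu Mt y - mu M y))
    with (mu Mt x - mu Mt y + - (mu M x - mu M y)) by ring.
  lra.
Qed.

Definition splice (a m : R) (Mt M : mechanism) : mechanism :=
  Mech (fun th => if Rle_dec th a then mr Mt th else mr M th)
       (fun th => if Rle_dec th a then mq Mt th else mq M th)
       (fun th => if Rle_dec th a then mu Mt th - m else mu M th).

Section Splice.

Variables (Mt M : mechanism) (a : R).
Hypotheses (HMt : ICIR thl thh qbar Mt) (HM : ICIR thl thh qbar M)
  (Ha : inTheta thl thh a)
  (Hgap_max : forall th, inTheta thl thh th ->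
     mu Mt th - mu M th <= mu Mt a - mu M a).

Let m := mu Mt a - mu M a.

(* Maximality of the gap at [a] forces the allocation of [Mt] at [a] to
   exceed that of [M] above [a], which carries the downward deviation. *)
Lemma splice_IC_deviation_up th th' :
  inTheta thl thh th -> inTheta thl thh th' -> th <= a -> a < th' ->
  mu Mt th - m >= mu M th' + (th' - th) * mq M th' * mr M th'.
Proof.
  intros Hth Hth' Hle Hlt.
  destruct HMt as [_ [ICT _]], HM as [_ [ICM _]].
  pose proof (ICT th a Hth Ha); pose proof (ICM a th' Ha Hth').
  pose proof (ICT th' a Hth' Ha); pose proof (Hgap_max th' Hth').
  unfold m in *.
  assert (Halloc : mq M th' * mr M th' <= mq Mt a * mr Mt a).
  { destruct (Rle_or_lt (mq M th' * mr M th') (mq Mt a * mr Mt a)); [assumption|].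
    nra. }
  assert (0 <= (a - th) * (mq Mt a * mr Mt a - mq M th' * mr M th'))
    by (apply Rmult_le_pos; lra).
  lra.
Qed.

Lemma splice_ICIR : ICIR thl thh qbar (splice a m Mt M).
Proof.
  pose proof HMt as [HmT [ICT IRT]]; pose proof HM as [Hm [ICM IRM]].
  split; [|split].
  - intros th Hth; simpl; destruct Rle_dec; [apply HmT | apply Hm]; assumption.
  - intros th th' Hth Hth'; simpl.
    destruct (Rle_dec th a), (Rle_dec th' a).
    + pose proof (ICT th th' Hth Hth'); lra.
    + apply splice_IC_deviation_up; auto; lra.
    + pose proof (ICT th th' Hth Hth'); pose proof (Hgap_max th Hth).
      unfold m in *; lra.
    + apply ICM; assumption.
  - intros th Hth; simpl; destruct Rle_dec; [|apply IRM; assumption].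
    pose proof (ICT th a Hth Ha); pose proof (IRM a Ha).
    destruct (HmT a Ha) as [[? ?] [[? ?] _]].
    assert (0 <= (a - th) * mq Mt a * mr Mt a)
      by (apply Rmult_le_pos; [apply Rmult_le_pos|]; lra).
    unfold m in *; lra.
Qed.

Lemma splice_dominates (P : R -> R) (c alpha alpha' : R) :
  alpha' < alpha < 1 -> 0 < m ->
  (forall th, inTheta thl thh th -> RS P c alpha th Mt >= RS P c alpha th M) ->
  dominates thl thh qbar P c alpha' (splice a m Mt M) M.
Proof.
  intros Hw Hm Hge.
  split; [exact splice_ICIR | split; [exact HM | split]].
  - intros th Hth; pose proof (Hge th Hth); unfold RS in *; simpl.
    destruct Rle_dec; [|lra].
    pose proof (Hgap_max th Hth); unfold m in *.
    destruct (Rle_or_lt 0 (mu Mt th - mu M th)).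
    + assert (0 <= (1 - alpha) * (mu Mt th - mu M th)) by (apply Rmult_le_pos; lra).
      assert (0 <= (1 - alpha') * (mu Mt a - mu M a - (mu Mt th - mu M th)))
        by (apply Rmult_le_pos; lra).
      lra.
    + assert (0 <= (alpha - alpha') * (mu M th - mu Mt th)) by (apply Rmult_le_pos; lra).
      assert (0 <= (1 - alpha') * (mu Mt a - mu M a)) by (apply Rmult_le_pos; lra).
      lra.
  - exists a; split; [exact Ha|].
    pose proof (Hge a Ha); unfold RS in *; simpl.
    destruct Rle_dec; [|lra].
    assert (0 < (1 - alpha) * m) by (apply Rmult_lt_0_compat; lra).
    unfold m in *; lra.
Qed.

End Splice.

Lemma dominates_lower_weight (P : R -> R) (c alpha alpha' : R) (Mt M : mechanism) :
  alpha' <= alpha ->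
  (forall th, inTheta thl thh th -> mu Mt th <= mu M th) ->
  dominates thl thh qbar P c alpha Mt M ->
  dominates thl thh qbar P c alpha' Mt M.
Proof.
  intros Hw Hu [HMt [HM [Hge [th0 [Hth0 Hgt]]]]].
  assert (Hshift : forall th, inTheta thl thh th ->
    RS P c alpha' th Mt - RS P c alpha' th M >= RS P c alpha th Mt - RS P c alpha th M).
  { intros th Hth; rewrite !(RS_weight_shift P c alpha alpha').
    pose proof (Hu th Hth).
    assert (0 <= (alpha - alpha') * (mu M th - mu Mt th)) by (apply Rmult_le_pos; lra).
    lra. }
  split; [exact HMt | split; [exact HM | split]].
  - intros th Hth; pose proof (Hge th Hth); pose proof (Hshift th Hth); lra.
  - exists th0; split; [exact Hth0|]; pose proof (Hshift th0 Hth0); lra.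
Qed.

Lemma dominated_lower_weight (P : R -> R) (c alpha alpha' : R) (Mt M : mechanism) :
  thl <= thh -> alpha' < alpha < 1 ->
  dominates thl thh qbar P c alpha Mt M ->
  exists Ms, dominates thl thh qbar P c alpha' Ms M.
Proof.
  intros Hlh Hw Hdom; pose proof Hdom as [HMt [HM [Hge _]]].
  destruct (classic (forall th, inTheta thl thh th -> mu Mt th <= mu M th)) as [Hu | Hu].
  - exists Mt; apply (dominates_lower_weight P c alpha); [lra | assumption..].
  - destruct (utility_gap_attains_max Mt M Hlh HMt HM) as [a [Ha Hmax]].
    assert (Hpos : 0 < mu Mt a - mu M a).
    { apply NNPP; intros Hneg; apply Hu; intros th Hth.
      pose proof (Hmax th Hth); lra. }
    exists (splice a (mu Mt a - mu M a) Mt M).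
    apply (splice_dominates Mt M a HMt HM Ha Hmax P c alpha); assumption.
Qed.

End Mechanisms.

Theorem proposition1
  (thl thh c qbar : R) (P : R -> R)
  (Hth : 0 < thl < thh) (Hc : 0 < c) (Hqbar : 0 < qbar)
  (HPcont : forall z, 0 <= z -> continuous P z)
  (HPnn : forall z, 0 <= z -> 0 <= P z)
  (HPdec : forall z1 z2, 0 <= z1 -> z1 < z2 -> z2 <= qbar -> P z2 < P z1)
  (HPq : P qbar = 0)
  (HA2 : exists q0, 0 <= q0 <= qbar /\ P q0 = thh /\ TS P c thh q0 > 0)
  (alpha alpha' : R) (Ha : 0 < alpha < 1) (Ha' : 0 < alpha' < 1)
  (Hlt : alpha' < alpha) :
  forall M : mechanism,
    undominated thl thh qbar P c alpha' M ->
    undominated thl thh qbar P c alpha M.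
Proof.
  intros M [HM Hnd]; split; [exact HM|].
  intros [Mt Hdom]; apply Hnd.
  apply (dominated_lower_weight thl thh qbar P c alpha alpha' Mt M); [lra | lra | exact Hdom].
Qed.
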